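(* Let $d'\ge 3$ and let $\alpha,\beta,\gamma,\delta$ be four pairwise distinct elements of $\{0,1,2\}^{d'}$. Then: (i) there exist distinct $v',w'\in\{0,1,2\}^{d'}\setminus\{\alpha,\beta,\gamma,\delta\}$ and indices $i,j\in[d']$ such that $v'_i=\alpha_i$ and $v'_j=\beta_j$; (ii) there exist distinct $v',w'\in\{0,1,2\}^{d'}\setminus\{\alpha,\beta,\gamma,\delta\}$, an index $j\in[d']$, and a $2$-element subset $\mathcal{I}\subseteq[d']$ such that $v'_j=\alpha_j$ and $v'_i=w'_i$ for each $i\in\mathcal{I}$.
   Context: For $u\in\{0,1,2\}^{d'}$, $u_i$ denotes its $i$-th coordinate, and $[d']=\{1,\dots,d'\}$. *)

From mathcomp Require Import all_boot.
Set Implicit Arguments. Unset Strict Implicit. Unset Printing Implicit Defensive.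

Definition ternary (d : nat) := {ffun 'I_d -> 'I_3}.

(* Project onto two coordinates i1, i2.  The four given vectors occupy at most
   four of the nine pairs, while the pairs agreeing with b in their first or in
   their second entry form a cross of five, so some pair p of the cross is free
   and every vector with projection p avoids the list.  Two such vectors that
   differ only at a third coordinate i0, one of them agreeing with a there,
   witness both claims at once; the four vectors need not be distinct. *)
From mathcomp Require Import all_boot.

Set Implicit Arguments.
Unset Strict Implicit.
Unset Printing Implicit Defensive.

Lemma exists_notin_seq (T : finType) (A : {set T}) (s : seq T) :
  size s < #|A| -> exists2 x, x \in A & x \notin s.
Proof.
move=> lt_s_A; apply/exists_inP; apply: contraTT lt_s_A => /exists_inPn A_in_s.
rewrite -leqNgt; apply: leq_trans (card_size s).
by apply/subset_leq_card/subsetP => x /A_in_s; rewrite negbK.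
Qed.

Definition cross (T : finType) (x y : T) : {set T * T} :=
  [set p | (p.1 == x) || (p.2 == y)].

Lemma card_cross (T : finType) (x y : T) : #|cross x y| = #|T| + #|T| - 1.
Proof.
have -> : cross x y = setX [set x] [set: T] :|: setX [set: T] [set y].
  by apply/setP => p; rewrite !inE andbT.
rewrite cardsU.
have -> : setX [set x] [set: T] :&: setX [set: T] [set y] = [set (x, y)].
  by apply/setP => -[p1 p2]; rewrite !inE andbT xpair_eqE.
by rewrite !cardsX !cards1 cardsT mul1n muln1.
Qed.

Section Ffun3.
Variables (I : finType) (T : Type) (i0 i1 i2 : I).

Definition ffun3 (z x y : T) : {ffun I -> T} :=
  [ffun k => if k == i0 then z else if k == i1 then x else y].

Lemma ffun3_0 z x y : ffun3 z x y i0 = z.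
Proof. by rewrite ffunE eqxx. Qed.

Lemma ffun3_1 z x y : i1 != i0 -> ffun3 z x y i1 = x.
Proof. by rewrite ffunE eqxx => /negbTE ->. Qed.

Lemma ffun3_2 z x y : i2 != i0 -> i2 != i1 -> ffun3 z x y i2 = y.
Proof. by rewrite ffunE => /negbTE -> /negbTE ->. Qed.

End Ffun3.

Theorem claim4p2 (d : nat) (hd : 3 <= d) (a b c e : ternary d) :
  a != b -> a != c -> a != e -> b != c -> b != e -> c != e ->
  (exists (v w : ternary d) (i j : 'I_d),
      [/\ v != w, v \notin [:: a; b; c; e], w \notin [:: a; b; c; e],
          v i = a i & v j = b j]) /\
  (exists (v w : ternary d) (j : 'I_d) (I : {set 'I_d}),
      [/\ v != w, v \notin [:: a; b; c; e], w \notin [:: a; b; c; e],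
          v j = a j & #|I| = 2] /\ (forall i, i \in I -> v i = w i)).
Proof.
move=> _ _ _ _ _ _.
pose i0 : 'I_d := Ordinal (leq_trans (isT : 0 < 3) hd).
pose i1 : 'I_d := Ordinal (leq_trans (isT : 1 < 3) hd).
pose i2 : 'I_d := Ordinal (leq_trans (isT : 2 < 3) hd).
pose L := [:: a; b; c; e]; pose proj (u : ternary d) := (u i1, u i2).
have [p cross_p p_free] : exists2 p, p \in cross (b i1) (b i2) & p \notin map proj L.
  by apply: exists_notin_seq; rewrite size_map card_cross card_ord.
pose u z : ternary d := ffun3 i0 i1 z p.1 p.2.
have u1 z : u z i1 = p.1 by exact: ffun3_1.
have u2 z : u z i2 = p.2 by exact: ffun3_2.
have u_off z : u z \notin L.
  by apply: contra p_free => /(map_f proj); rewrite /proj u1 u2 -surjective_pairing.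
have [z z_neq] : exists z : 'I_3, z != a i0.
  exists (if a i0 == ord0 then ord_max else ord0).
  by case: (a i0 =P ord0) => [->|/eqP]; rewrite // eq_sym.
have uz_neq : u (a i0) != u z.
  by apply: contra_neq z_neq => /(congr1 (fun f : ternary d => f i0)); rewrite !ffun3_0.
split.
- exists (u (a i0)), (u z), i0.
  move: cross_p; rewrite inE => /orP[] /eqP b_p; [exists i1 | exists i2];
    by split; rewrite ?ffun3_0 ?u1 ?u2.
- exists (u (a i0)), (u z), i0, [set i1; i2].
  split; first by split; rewrite ?ffun3_0 ?cards2.
  by move=> i; rewrite !inE => /orP[] /eqP ->; rewrite ?u1 ?u2.
Qed.
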